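(* Let $\gamma(x)=\sum_{k\ge2}\gamma_kx^{k-1}$ be a degree distribution with average degree $a$ and maximal degree $d\ge3$, and let $i$ be an integer with $1<i<d$ such that $\gamma_i>0$ and $\gamma_{i+2}>0$. For $\beta>0$ define $$\hat\gamma(x)=\gamma(x)+\beta x^{i}-\Bigl\{\frac{i}{2(i+1)}\beta x^{i-1}+\frac{i+2}{2(i+1)}\beta x^{i+1}\Bigr\}.$$ Then for every sufficiently small $\beta>0$, $\hat\gamma$ is a degree distribution with the same average degree $a$ and the same maximal degree $d$, and moreover $\gamma(x)<\hat\gamma(x)$ for $\frac{i}{i+2}<x<1$ and $\gamma(x)>\hat\gamma(x)$ for $0<x<\frac{i}{i+2}$.
   Context: A degree distribution is a polynomial $\gamma(x)=\sum_{k\ge2}\gamma_kx^{k-1}$ with $\gamma_k\ge0$ and $\sum_k\gamma_k=1$; its maximal degree is the largest $k$ with $\gamma_k\ne0$, and its average degree $a$ is defined by $1/a=\int_0^1\gamma(x)\,dx$. *)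

(* A degree distribution gamma(x) = sum_{k>=2} gamma_k x^(k-1)
   is represented as a polynomial p : {poly R}; the coefficient p`_j is
   gamma_{j+1} (the coefficient of x^j), so gamma_k = p`_(k.-1). *)
From HB Require Import structures.
From mathcomp Require Import all_boot all_order all_algebra.
Set Implicit Arguments. Unset Strict Implicit. Unset Printing Implicit Defensive.
Import Order.TTheory GRing.Theory Num.Theory.
Local Open Scope ring_scope.

Section DegDist.
Variable R : realFieldType.

Definition gcoef (p : {poly R}) (k : nat) : R := p`_(k.-1).

Definition is_degdist (p : {poly R}) : Prop :=
  p`_0 = 0 /\ (forall j : nat, 0 <= p`_j) /\ \sum_(j < size p) p`_j = 1.

(* maximal degree: largest k with gamma_k <> 0, i.e. (deg p) + 1 = size p *)
Definition maxdeg (p : {poly R}) : nat := size p.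

(* int_0^1 p(x) dx, computed termwise: sum_j p_j / (j+1) *)
Definition int01 (p : {poly R}) : R := \sum_(j < size p) p`_j / (j.+1)%:R.

(* average degree a, defined by 1/a = int_0^1 gamma(x) dx *)
Definition avgdeg (p : {poly R}) : R := (int01 p)^-1.

End DegDist.

(** The polynomial [beta X^i - (w_lo beta X^(i-1) + w_hi beta X^(i+1))] with
    [w_lo = i/(2(i+1))] and [w_hi = (i+2)/(2(i+1))] moves mass into degree
    [i+1] from its two neighbours.  Since [w_lo + w_hi = 1] and
    [w_lo/i = w_hi/(i+2) = 1/(2(i+1))], it vanishes at [x = 1] and has zero
    integral over [[0,1]], so total mass and average degree are preserved; it
    factors as [beta x^(i-1) (1 - x) ((i+2) x - i) / (2(i+1))], whence the sign
    change at [i/(i+2)].  For [beta] below [gamma_i] and [gamma_(i+2)] the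
    coefficients stay nonnegative and the support keeps its maximum. *)
From HB Require Import structures.
From mathcomp Require Import all_boot all_order all_algebra.
From mathcomp Require Import zify ring.
Set Implicit Arguments. Unset Strict Implicit. Unset Printing Implicit Defensive.
Import Order.TTheory GRing.Theory Num.Theory.
Local Open Scope ring_scope.

Lemma sum_coef_horner1 (R : nzSemiRingType) (p : {poly R}) :
  \sum_(j < size p) p`_j = p.[1].
Proof. by rewrite horner_coef; apply: eq_bigr => j _; rewrite expr1n mulr1. Qed.

Lemma size_eq_coef_tail (R : nzSemiRingType) (p q : {poly R}) (n : nat) :
  p`_n != 0 -> (forall j, (n <= j)%N -> (q`_j == 0) = (p`_j == 0)) ->
  size q = size p.
Proof.
move=> pn_neq0 tail_eq.
have n_lt_p : (n < size p)%N.
  by rewrite ltnNge; apply: contra pn_neq0 => /(nth_default 0) ->.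
apply/eqP; rewrite eqn_leq; apply/andP; split.
  apply/leq_sizeP => j le_pj; apply/eqP; rewrite tail_eq ?nth_default //.
  exact: leq_trans (ltnW n_lt_p) le_pj.
have lead_neq0 : p`_(size p).-1 != 0.
  by rewrite -lead_coefE lead_coef_eq0 -size_poly_gt0; lia.
have : q`_(size p).-1 != 0 by rewrite tail_eq //; lia.
apply: contraNT; rewrite -ltnNge => lt_qp.
by rewrite nth_default // -ltnS (ltn_predK lt_qp).
Qed.

Section Integral.
Variable R : realFieldType.

Lemma int01_wide [n : nat] [p : {poly R}] : (size p <= n)%N ->
  int01 p = \sum_(j < n) p`_j / (j.+1)%:R.
Proof.
move=> le_pn; rewrite /int01 (big_ord_widen n (fun j => p`_j / (j.+1)%:R)) //.
rewrite big_mkcond /=; apply: eq_bigr => j _.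
by case: ltnP => // le_pj; rewrite nth_default ?mul0r.
Qed.

Lemma int01_is_linear : linear_for *%R (@int01 R).
Proof.
move=> a p q; set n := maxn (size p) (size q).
have le_apq : (size (a *: p + q)%R <= n)%N.
  apply: leq_trans (size_polyD _ _) _.
  by rewrite geq_max !leq_max size_scale_leq leqnn orbT.
rewrite (int01_wide le_apq) (int01_wide (leq_maxl (size p) (size q))).
rewrite (int01_wide (leq_maxr (size p) (size q))) mulr_sumr -big_split /=.
apply: eq_bigr => j _.
by rewrite coefD coefZ mulrDl mulrA.
Qed.

HB.instance Definition _ :=
  GRing.isLinear.Build R {poly R} R *%R (@int01 R) int01_is_linear.

Lemma int01Xn (n : nat) : int01 ('X^n : {poly R}) = (n.+1)%:R^-1.
Proof.
rewrite (int01_wide (eq_leq (size_polyXn R n))) big_ord_recr /= coefXn eqxx mul1r.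
by rewrite big1 ?add0r // => j _; rewrite coefXn ltn_eqF ?mul0r.
Qed.

Lemma is_degdist_addr (p q : {poly R}) :
  is_degdist p -> q`_0 = 0 -> q.[1] = 0 -> (forall j, 0 <= (p + q)`_j) ->
  is_degdist (p + q).
Proof.
move=> [p0 [_ psum]] q0 q1 pq_ge0; split; [|split] => //.
  by rewrite coefD p0 q0 addr0.
by rewrite sum_coef_horner1 hornerD q1 addr0 -sum_coef_horner1.
Qed.

End Integral.

Section MassTransfer.
Variables (R : realFieldType) (i : nat) (b : R).

Definition mass_transfer : {poly R} :=
  b *: 'X^i - ((i%:R / (2 * (i.+1)%:R) * b) *: 'X^(i.-1)
               + ((i.+2)%:R / (2 * (i.+1)%:R) * b) *: 'X^(i.+1)).

Hypothesis i_gt0 : (0 < i)%N.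

Let i_pred : i.-1.+1 = i. Proof. by rewrite prednK. Qed.

Let weight_lo_lt1 : i%:R / (2 * (i.+1)%:R) < 1 :> R.
Proof. by rewrite ltr_pdivrMr ?mul1r -?natrM ?ltr0n ?ltr_nat //; lia. Qed.

Let weight_hi_lt1 : (i.+2)%:R / (2 * (i.+1)%:R) < 1 :> R.
Proof. by rewrite ltr_pdivrMr ?mul1r -?natrM ?ltr0n ?ltr_nat //; lia. Qed.

Lemma coef_mass_transfer (j : nat) : mass_transfer`_j =
  b * (j == i)%:R - (i%:R / (2 * (i.+1)%:R) * b * (j == i.-1)%:R
                     + (i.+2)%:R / (2 * (i.+1)%:R) * b * (j == i.+1)%:R).
Proof. by rewrite !(coefD, coefB, coefN, coefZ, coefXn). Qed.

Lemma coef_mass_transfer_out (j : nat) :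
  j != i.-1 -> j != i -> j != i.+1 -> mass_transfer`_j = 0.
Proof.
move=> /negbTE ne_lo /negbTE ne_mid /negbTE ne_hi.
by rewrite coef_mass_transfer ne_lo ne_mid ne_hi !mulr0 addr0 subr0.
Qed.

Lemma coef_mass_transfer_lo :
  mass_transfer`_(i.-1) = - (i%:R / (2 * (i.+1)%:R) * b).
Proof.
have [/negbTE ne_mid /negbTE ne_hi] : i.-1 != i /\ i.-1 != i.+1.
  by split; apply/eqP; lia.
by rewrite coef_mass_transfer eqxx ne_mid ne_hi !mulr0 mulr1 addr0 sub0r.
Qed.

Lemma coef_mass_transfer_mid : mass_transfer`_i = b.
Proof.
have [/negbTE ne_lo /negbTE ne_hi] : i != i.-1 /\ i != i.+1.
  by split; apply/eqP; lia.
by rewrite coef_mass_transfer eqxx ne_lo ne_hi !mulr0 mulr1 addr0 subr0.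
Qed.

Lemma coef_mass_transfer_hi :
  mass_transfer`_(i.+1) = - ((i.+2)%:R / (2 * (i.+1)%:R) * b).
Proof.
have [/negbTE ne_mid /negbTE ne_lo] : i.+1 != i /\ i.+1 != i.-1.
  by split; apply/eqP; lia.
by rewrite coef_mass_transfer eqxx ne_mid ne_lo !mulr0 mulr1 !add0r.
Qed.

Lemma coef_mass_transfer_gt (j : nat) : 0 < b -> - b < mass_transfer`_j.
Proof.
move=> b_gt0.
have [-> | ne_lo] := eqVneq j i.-1.
  by rewrite coef_mass_transfer_lo ltrN2 gtr_pMl.
have [-> | ne_mid] := eqVneq j i.
  by rewrite coef_mass_transfer_mid gtrN.
have [-> | ne_hi] := eqVneq j i.+1.
  by rewrite coef_mass_transfer_hi ltrN2 gtr_pMl.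
by rewrite coef_mass_transfer_out // oppr_lt0.
Qed.

Lemma coef_mass_transfer_ge0 (j : nat) :
  0 <= b -> j != i.-1 -> j != i.+1 -> 0 <= mass_transfer`_j.
Proof.
move=> b_ge0 ne_lo ne_hi.
have [-> | ne_mid] := eqVneq j i; first by rewrite coef_mass_transfer_mid.
by rewrite coef_mass_transfer_out.
Qed.

Section SmallTransfer.
Variable p : {poly R}.
Hypotheses (b_gt0 : 0 < b) (b_lt_lo : b < p`_i.-1) (b_lt_hi : b < p`_i.+1).

Lemma coef_add_mass_transfer_gt0 (j : nat) :
  0 < p`_j -> 0 < (p + mass_transfer)`_j.
Proof.
move=> pj_gt0; rewrite coefD -[X in X < _](subrr b).
have mt_gt := coef_mass_transfer_gt^~ b_gt0.
have [-> | ne_lo] := eqVneq j i.-1; first exact: ltrD b_lt_lo (mt_gt _).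
have [-> | ne_hi] := eqVneq j i.+1; first exact: ltrD b_lt_hi (mt_gt _).
by rewrite subrr ltr_wpDr // coef_mass_transfer_ge0 // ltW.
Qed.

Lemma coef_add_mass_transfer_ge0 (j : nat) :
  0 <= p`_j -> 0 <= (p + mass_transfer)`_j.
Proof.
move=> pj_ge0.
have [-> | ne_lo] := eqVneq j i.-1.
  exact/ltW/coef_add_mass_transfer_gt0/(lt_trans b_gt0 b_lt_lo).
have [-> | ne_hi] := eqVneq j i.+1.
  exact/ltW/coef_add_mass_transfer_gt0/(lt_trans b_gt0 b_lt_hi).
by rewrite coefD addr_ge0 // coef_mass_transfer_ge0 // ltW.
Qed.

End SmallTransfer.

Lemma horner_mass_transfer (x : R) : mass_transfer.[x] =
  b * x ^+ i.-1 * (1 - x) * ((i.+2)%:R * x - i%:R) / (2 * (i.+1)%:R).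
Proof.
have xi : x ^+ i = x ^+ i.-1 * x by rewrite -exprSr i_pred.
have i1_neq0 : i%:R + 1 != 0 :> R by rewrite natr1 pnatr_eq0.
rewrite /mass_transfer !(hornerD, hornerN, hornerZ, hornerXn) exprSr xi.
rewrite -[(i.+2)%:R]natr1 -[(i.+1)%:R]natr1.
by field.
Qed.

Lemma horner_mass_transfer1 : mass_transfer.[1] = 0.
Proof. by rewrite horner_mass_transfer subrr !(mulr0, mul0r). Qed.

Lemma int01_mass_transfer : int01 mass_transfer = 0.
Proof.
rewrite /mass_transfer linearB linearD !scalarZ /= !int01Xn i_pred.
by field; rewrite !gt_eqF ?ltr_wpDr ?ler0n ?ltr0n.
Qed.

Lemma horner_mass_transfer_gt0 (x : R) :
  0 < b -> i%:R / (i.+2)%:R < x -> x < 1 -> 0 < mass_transfer.[x].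
Proof.
move=> b_gt0 lt_ix lt_x1.
have x_gt0 : 0 < x by apply: le_lt_trans lt_ix; rewrite divr_ge0 ?ler0n.
have lin_gt0 : i%:R < (i.+2)%:R * x by rewrite mulrC -ltr_pdivrMr ?ltr0n.
by rewrite horner_mass_transfer divr_gt0 ?mulr_gt0 ?exprn_gt0 ?subr_gt0 ?ltr0n.
Qed.

Lemma horner_mass_transfer_lt0 (x : R) :
  0 < b -> 0 < x -> x < i%:R / (i.+2)%:R -> mass_transfer.[x] < 0.
Proof.
move=> b_gt0 x_gt0 lt_xi.
have lt_x1 : x < 1.
  apply: lt_le_trans lt_xi _.
  by rewrite ler_pdivrMr ?mul1r ?ler_nat ?ltr0n // leqW.
have lin_lt0 : (i.+2)%:R * x < i%:R by rewrite mulrC -ltr_pdivlMr ?ltr0n.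
rewrite horner_mass_transfer pmulr_llt0 ?invr_gt0 ?mulr_gt0 ?ltr0n //.
by rewrite pmulr_rlt0 ?subr_lt0 // !mulr_gt0 ?exprn_gt0 ?subr_gt0.
Qed.

End MassTransfer.

Theorem lemma8 (R : realFieldType) (g : {poly R}) (i : nat) :
  is_degdist g -> (3 <= maxdeg g)%N ->
  (1 < i)%N -> (i < maxdeg g)%N ->
  0 < gcoef g i -> 0 < gcoef g i.+2 ->
  exists eps : R, 0 < eps /\
    forall beta : R, 0 < beta -> beta < eps ->
      let gh := g + beta *: 'X^i
                  - ((i%:R / (2 * (i.+1)%:R) * beta) *: 'X^(i.-1)
                     + ((i.+2)%:R / (2 * (i.+1)%:R) * beta) *: 'X^(i.+1)) in
      [/\ is_degdist gh, avgdeg gh = avgdeg g, maxdeg gh = maxdeg g,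
          (forall x : R, i%:R / (i.+2)%:R < x -> x < 1 -> g.[x] < gh.[x]) &
          (forall x : R, 0 < x -> x < i%:R / (i.+2)%:R -> gh.[x] < g.[x])].
Proof.
move=> g_deg _ i_gt1 _; rewrite /gcoef => lo_gt0 hi_gt0.
have i_gt0 : (0 < i)%N by apply: ltnW.
exists (Num.min g`_i.-1 g`_i.+1); split; first by rewrite lt_min lo_gt0.
move=> b b_gt0; rewrite lt_min => /andP[b_lt_lo b_lt_hi].
rewrite -addrA -/(mass_transfer i b).
have [_ [g_ge0 _]] := g_deg.
have coef_gt0 := coef_add_mass_transfer_gt0 i_gt0 b_gt0 b_lt_lo b_lt_hi.
split.
- apply: is_degdist_addr; rewrite ?horner_mass_transfer1 //.
    by rewrite coef_mass_transfer_out //; apply/eqP; lia.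
  by move=> j; apply: coef_add_mass_transfer_ge0.
- by rewrite /avgdeg linearD /= int01_mass_transfer // addr0.
- apply: (size_eq_coef_tail (n := i.+1)); first exact: lt0r_neq0.
  move=> j; rewrite leq_eqVlt => /predU1P[<- | lt_ij].
    by rewrite !gt_eqF ?coef_gt0.
  by rewrite coefD coef_mass_transfer_out ?addr0 //; apply/eqP; lia.
- by move=> x lt_ix lt_x1; rewrite hornerD ltrDl horner_mass_transfer_gt0.
- by move=> x x_gt0 lt_xi; rewrite hornerD gtrDl horner_mass_transfer_lt0.
Qed.
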